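(* Let $\Gamma$ be a primitive strongly regular graph. Then $E(\Gamma)=E(\bar\Gamma)$ if and only if either $\Gamma$ is a conference graph, or $\Gamma$ has $OA(n,m)$ parameters, i.e. parameters $(n^2, m(n-1), m^2-3m+n, m(m-1))$, for some positive integers $n,m$ with $m\notin\{n,n+1\}$. Moreover, if $E(\Gamma)=E(\bar\Gamma)$ and $\Gamma$ is not a conference graph, then $\Gamma$ and $\bar\Gamma$ are not isospectral.
   Context: A strongly regular graph with parameters $(n,k,e,d)$ is a $k$-regular simple graph on $n$ vertices, neither complete nor edgeless, in which adjacent vertices have $e$ common neighbours and distinct non-adjacent vertices have $d$ common neighbours; it is primitive if it and its complement $\bar\Gamma$ are both connected. A conference graph is a strongly regular graph with parameters $(4t+1,2t,t-1,t)$. The energy $E$ is the sum of the absolute values of the adjacency eigenvalues (with multiplicity); isospectral means equal adjacency spectra with multiplicities. *)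

From HB Require Import structures.
From mathcomp Require Import all_boot all_order all_algebra all_field.
Set Implicit Arguments. Unset Strict Implicit. Unset Printing Implicit Defensive.
Import Order.TTheory GRing.Theory Num.Theory.

(* A simple graph on a finite vertex type T is a symmetric irreflexive
   relation adj : rel T. *)

Definition compl_graph (T : finType) (adj : rel T) : rel T :=
  fun x y => (x != y) && ~~ adj x y.

Definition common_nbrs (T : finType) (adj : rel T) (x y : T) : nat :=
  #|[set z | adj x z && adj y z]|.

Definition is_srg (T : finType) (adj : rel T) (n k e d : nat) : Prop :=
  [/\ #|T| = n,
      (forall x : T, #|[set y | adj x y]| = k),
      (forall x y : T, adj x y -> common_nbrs adj x y = e),
      (forall x y : T, x != y -> ~~ adj x y -> common_nbrs adj x y = d)
    & ((exists x y : T, x != y /\ ~~ adj x y)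
       /\ (exists x y : T, adj x y)) ].

Definition connected_graph (T : finType) (adj : rel T) : Prop :=
  forall x y : T, connect adj x y.

Definition primitive_srg (T : finType) (adj : rel T) : Prop :=
  connected_graph adj /\ connected_graph (compl_graph adj).

Definition conference_graph (T : finType) (adj : rel T) : Prop :=
  exists t : nat, is_srg adj (4 * t + 1) (2 * t) (t - 1) t.

(* OA(n,m) parameters (n^2, m(n-1), m^2-3m+n, m(m-1));
   the third parameter is written m^2 + n - 3m to avoid truncation of nat
   subtraction in the intermediate m^2 - 3m. *)
Definition OA_params (T : finType) (adj : rel T) (n m : nat) : Prop :=
  is_srg adj (n ^ 2) (m * (n - 1)) (m ^ 2 + n - 3 * m) (m * (m - 1)).

Definition adj_mx (T : finType) (adj : rel T) : 'M[algC]_#|T| :=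
  \matrix_(i, j) (adj (enum_val i) (enum_val j))%:R%R.

Definition spectrum (T : finType) (adj : rel T) : seq algC :=
  sval (closed_field_poly_normal (char_poly (adj_mx adj))).

Definition energy (T : finType) (adj : rel T) : algC :=
  (\sum_(z <- spectrum adj) `|z|)%R.

Definition isospectral (T : finType) (adj1 adj2 : rel T) : Prop :=
  perm_eq (spectrum adj1) (spectrum adj2).

(* The adjacency matrix A of a primitive strongly regular graph with parameters
   (v, k, e, d) satisfies A^2 = k I + e A + d (J - I - A), so its spectrum is k
   (once), r (f times) and s (g times), where r > 0 > s are the roots of
   x^2 - (e - d) x - (k - d); the complement J - I - A has eigenvalues v - k - 1,
   -1 - r (f times) and -1 - s (g times). The multiplicities follow from
   tr A = 0 and tr A^2 = v k, which give f + g = v - 1 and f r + g s = -k.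
   Hence E(A) - E(J - I - A) = 2 (k - f), so equal energies mean f = k, that is
   k r + (v - k - 1) s + k = 0. If v - k - 1 = k this forces r + s = -1, the
   conference case. Otherwise it makes r rational, hence an integer (it is an
   algebraic integer); with r = n - m and s = -m, the identity
   k (k - e - 1) = d (v - k - 1) turns the parameters into those of OA(n, m).
   Isospectral graphs have equal tr A^2, which forces v - k - 1 = k. *)

From mathcomp Require Import all_boot all_order all_algebra all_field.
From mathcomp Require Import ring zify.

Set Implicit Arguments.
Unset Strict Implicit.
Unset Printing Implicit Defensive.

Import Order.TTheory GRing.Theory Num.Theory.

Local Open Scope ring_scope.

Lemma sum_count_mem (T : eqType) (M : nmodType) (F : T -> M) (s t : seq T) :
  uniq t -> {subset s <= t} ->
  \sum_(x <- s) F x = \sum_(y <- t) F y *+ count_mem y s.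
Proof.
move=> t_uniq; elim: s => [|x s IHs] s_t; first by rewrite big_nil big1 // => y _.
rewrite big_cons IHs => [|y ys]; last by apply: s_t; rewrite inE ys orbT.
under [RHS]eq_bigr do rewrite /= mulrnDr.
rewrite big_split /=; congr (_ + _).
have x_t : x \in t by apply: s_t; rewrite mem_head.
rewrite (bigD1_seq x) //= eqxx mulr1n big1 ?addr0 // => y.
by rewrite eq_sym => /negPf ->.
Qed.

Lemma two_point_weights_unique (R : idomainType) (r s x y x' y' : R) : r != s ->
  x + y = x' + y' -> x * r + y * s = x' * r + y' * s -> x = x' /\ y = y'.
Proof.
move=> rs xy_add xy_moment; have rs_neq0 : r - s != 0 by rewrite subr_eq0.
have x_eq : x = x'.
  apply/subr0_eq/(mulIf rs_neq0); rewrite mul0r.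
  transitivity ((x * r + y * s) - (x' * r + y' * s) - s * ((x + y) - (x' + y'))); first by ring.
  by rewrite xy_add xy_moment !subrr mulr0 subrr.
by split=> //; apply: (addrI x); rewrite {2}x_eq.
Qed.

Lemma natC_inj : injective (fun m : nat => m%:R : algC).
Proof. exact: mulrIn (oner_neq0 _). Qed.

Lemma eq_of_subr_eq (V : zmodType) (x y a b : V) : x - y = a - b -> a = b -> x = y.
Proof. by move=> xy_ab ab; apply/subr0_eq; rewrite xy_ab ab subrr. Qed.

(** * Spectra of normal matrices *)

Section Eigenvalues.
Variable n : nat.
Implicit Types (B P : 'M[algC]_n) (d : 'rV[algC]_n).

Definition eigenvalues B : seq algC := sval (closed_field_poly_normal (char_poly B)).

Lemma char_poly_eigenvalues B : char_poly B = \prod_(z <- eigenvalues B) ('X - z%:P).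
Proof.
rewrite /eigenvalues; case: closed_field_poly_normal => /= zs ->.
by rewrite (monicP (char_poly_monic B)) scale1r.
Qed.

Lemma size_eigenvalues B : size (eigenvalues B) = n.
Proof.
by have := size_char_poly B; rewrite char_poly_eigenvalues size_prod_XsubC => -[].
Qed.

Lemma eigenvalue_of_eigenvalues B z : z \in eigenvalues B -> eigenvalue B z.
Proof. by rewrite eigenvalue_root_char char_poly_eigenvalues root_prod_XsubC. Qed.

Lemma char_poly_similar P B : P \in unitmx ->
  char_poly (invmx P *m B *m P) = char_poly B.
Proof.
move=> P_unit; rewrite /char_poly /char_poly_mx.
set Q := map_mx polyC P; set Qi := map_mx polyC (invmx P).
have QiQ : Qi *m Q = 1%:M by rewrite -map_mxM mulVmx // map_mx1.
have QQi : Q *m Qi = 1%:M by rewrite -map_mxM mulmxV // map_mx1.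
have -> : 'X%:M - map_mx polyC (invmx P *m B *m P) = Qi *m ('X%:M - map_mx polyC B) *m Q.
  by rewrite mulmxBr mulmxBl mul_mx_scalar -scalemxAl QiQ scalemx1 !map_mxM.
by rewrite !det_mulmx mulrC mulrA -det_mulmx QQi det1 mul1r.
Qed.

Lemma mxtrace_similar P B : P \in unitmx -> \tr (invmx P *m B *m P) = \tr B.
Proof. by move=> P_unit; rewrite mxtrace_mulC mulmxA mulmxV // mul1mx. Qed.

Lemma eigenvalues_similar_diag P d : P \in unitmx ->
  perm_eq (eigenvalues (invmx P *m diag_mx d *m P)) [seq d 0 i | i <- enum 'I_n].
Proof.
move=> P_unit; apply: prod_XsubC_eq.
rewrite -char_poly_eigenvalues char_poly_similar // char_poly_trig ?diag_mx_is_trig //.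
by rewrite big_map big_enum; apply: eq_bigr => i _; rewrite mxE eqxx mulr1n.
Qed.

Lemma sum_eigenvalues_normal B : B \is normalmx -> \sum_(z <- eigenvalues B) z = \tr B.
Proof.
move/orthomx_spectralP => ->; have P_unit := spectral_unit B.
rewrite (perm_big _ (eigenvalues_similar_diag _ P_unit)) big_map big_enum /=.
by rewrite mxtrace_similar // mxtrace_diag.
Qed.

Lemma sum_sqr_eigenvalues_normal B : B \is normalmx ->
  \sum_(z <- eigenvalues B) z ^+ 2 = \tr (B *m B).
Proof.
move/orthomx_spectralP => ->; have P_unit := spectral_unit B.
rewrite (perm_big _ (eigenvalues_similar_diag _ P_unit)) big_map big_enum /=.
set P := spectralmx B; set D := diag_mx _.
have -> : invmx P *m D *m P *m (invmx P *m D *m P) = invmx P *m (D *m D) *m P.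
  by rewrite !mulmxA mulmxK.
rewrite mxtrace_similar // mulmx_diag mxtrace_diag.
by apply: eq_bigr => i _; rewrite mxE expr2.
Qed.

End Eigenvalues.

Lemma eigenvalue_annihilated3 (F : fieldType) n (B : 'M[F]_n) a b c z :
  (B - a%:M) *m (B - b%:M) *m (B - c%:M) = 0 -> eigenvalue B z ->
  z \in [:: a; b; c].
Proof.
move=> B_ann /eigenvalueP [u uB u_neq0].
have uBx x : u *m (B - x%:M) = (z - x) *: u.
  by rewrite mulmxBr uB mul_mx_scalar scalerBl.
have : u *m ((B - a%:M) *m (B - b%:M) *m (B - c%:M)) = 0 by rewrite B_ann mulmx0.
rewrite !mulmxA uBx -!scalemxAl uBx -scalemxAl uBx !scalerA => /eqP.
by rewrite scaler_eq0 (negPf u_neq0) orbF !mulf_eq0 !subr_eq0 !inE -orbA.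
Qed.

Section ThreeEigenvalues.
Variables (n : nat) (B : 'M[algC]_n) (a b c : algC).
Hypotheses (B_normal : B \is normalmx)
  (B_ann : (B - a%:M) *m (B - b%:M) *m (B - c%:M) = 0)
  (abc_uniq : uniq [:: a; b; c])
  (trB : \tr B = 0) (trB2 : \tr (B *m B) = n%:R * c)
  (c_simple : (c - a) * (c - b) = n%:R * (c + a * b)).

Local Notation mult x := (count_mem x (eigenvalues B)).

Lemma sum_eigenvalues_count (M : nmodType) (F : algC -> M) :
  \sum_(z <- eigenvalues B) F z = F a *+ mult a + F b *+ mult b + F c *+ mult c.
Proof.
rewrite (sum_count_mem F abc_uniq); first by rewrite !big_cons big_nil addr0 addrA.
by move=> z /eigenvalue_of_eigenvalues; apply: eigenvalue_annihilated3.
Qed.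

Lemma size_eigenvalues_count : (mult a + mult b + mult c)%N = n.
Proof.
by have := sum_eigenvalues_count (fun => 1%N); rewrite sum1_size size_eigenvalues !natn.
Qed.

Lemma trace_eigenvalues_count :
  (mult a)%:R * a + (mult b)%:R * b + (mult c)%:R * c = 0.
Proof. by rewrite -trB -sum_eigenvalues_normal // sum_eigenvalues_count !mulr_natl. Qed.

Lemma count_simple_eigenvalue : mult c = 1%N.
Proof.
have E2 : (mult a)%:R * a ^+ 2 + (mult b)%:R * b ^+ 2 + (mult c)%:R * c ^+ 2 = n%:R * c.
  by rewrite -trB2 -sum_sqr_eigenvalues_normal // sum_eigenvalues_count !mulr_natl.
have cab_neq0 : (c - a) * (c - b) != 0.
  move: abc_uniq => /= /and3P[]; rewrite !inE negb_or => /andP[_ ac] bc _.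
  by rewrite mulf_neq0 // subr_eq0 eq_sym.
(* (z - a) * (z - b) vanishes at a and b, so its sum over the spectrum counts the copies of c. *)
have count_c : (mult c)%:R * ((c - a) * (c - b)) =
    ((mult a)%:R * a ^+ 2 + (mult b)%:R * b ^+ 2 + (mult c)%:R * c ^+ 2)
    - (a + b) * ((mult a)%:R * a + (mult b)%:R * b + (mult c)%:R * c)
    + a * b * ((mult a + mult b + mult c)%N)%:R by rewrite !natrD; ring.
rewrite E2 trace_eigenvalues_count size_eigenvalues_count mulr0 subr0 in count_c.
rewrite (mulrC (a * b)) -mulrDr -c_simple in count_c.
by apply/natC_inj/(mulIf cab_neq0); rewrite count_c mul1r.
Qed.

Lemma count_eigenvalues_add : (mult a)%:R + (mult b)%:R = n%:R - 1 :> algC.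
Proof.
by rewrite -[in RHS]size_eigenvalues_count count_simple_eigenvalue !natrD addrK.
Qed.

Lemma count_eigenvalues_trace : (mult a)%:R * a + (mult b)%:R * b = - c.
Proof.
apply/eqP; rewrite -subr_eq0 opprK; apply/eqP.
by rewrite -trace_eigenvalues_count count_simple_eigenvalue mul1r.
Qed.

Lemma sum_eigenvalues_simple (F : algC -> algC) :
  \sum_(z <- eigenvalues B) F z = (mult a)%:R * F a + (mult b)%:R * F b + F c.
Proof. by rewrite sum_eigenvalues_count count_simple_eigenvalue !mulr_natl. Qed.

End ThreeEigenvalues.

(** * Arithmetic of the parameters *)

Local Close Scope ring_scope.

Definition conference_parameters (v k e d : nat) : Prop :=
  [/\ v = 4 * d + 1, k = 2 * d & e = d - 1].

Definition oa_parameters (n m v k e d : nat) : Prop :=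
  [/\ v = n ^ 2, k = m * (n - 1), e = m ^ 2 + n - 3 * m & d = m * (m - 1)].

(* For r = R and s = -M, the hypotheses say r + s = e - d, r s = d - k and
   k r + w s + k = 0. *)
Lemma oa_parameters_of_integral_eigenvalues (v k e d w R M : nat) :
  0 < R -> 1 < M -> v = w + k.+1 ->
  k * k + d * k.+1 = k + e * k + d * v ->
  R + d = e + M -> R * M + d = k -> k * R + k = w * M ->
  oa_parameters (R + M) M v k e d.
Proof.
move=> R_gt0 M_gt1 -> identity rs_add rs_mul balance.
have k_gt0 : 0 < k by rewrite -rs_mul addn_gt0 muln_gt0 R_gt0 ltnW.
have kk : k * k = k + e * k + d * w by move: identity; rewrite mulnDr; lia.
have kM : k * M = M + e * M + d * R.+1.
  apply/eqP; rewrite -(eqn_pmul2l k_gt0); apply/eqP.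
  rewrite mulnA kk !mulnDl -(mulnA d) -balance; ring.
have MM : M * M = d + M.
  apply/eqP; rewrite -(eqn_pmul2l (ltn0Sn R)); apply/eqP.
  move: kM; rewrite -rs_mul; nia.
have d_eq : d = M * (M - 1) by rewrite mulnBr muln1 MM addnK.
have k_eq : k = M * (R + M - 1) by rewrite -rs_mul d_eq (mulnC R) -mulnDr; congr (M * _); lia.
have w_eq : w = (R + M - 1) * R.+1.
  apply/eqP; rewrite -(eqn_pmul2r (ltnW M_gt1)); apply/eqP.
  by rewrite -balance k_eq; set N := (R + M - 1); ring.
split=> //; last by rewrite -mulnn; lia.
have [N RM] : exists N, R + M = N.+1 by exists (R + M).-1; lia.
rewrite w_eq k_eq (_ : R + M - 1 = N); last by lia.
by rewrite expnS expn1 {1}RM; lia.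
Qed.

Lemma leq_mul3_sqr (m n : nat) : 1 < n -> 3 * m <= m ^ 2 + n.
Proof. by case: m => [|[|[|m]]] //; nia. Qed.

Local Open Scope ring_scope.

Lemma real_ltr_sqr (R : numDomainType) (x y : R) :
  x \is Num.real -> 0 <= y -> x ^+ 2 < y ^+ 2 -> x < y.
Proof.
move=> x_real y_ge0 lt_sqr; have [x_ge0|x_lt0] := real_ge0P x_real.
  by rewrite -(@ltr_pXn2r _ 2) ?nnegrE.
exact: lt_le_trans x_lt0 y_ge0.
Qed.

Lemma Cint_rat_quadratic_root (x p q : algC) : p \in Num.int -> q \in Num.int ->
  x \in Crat -> x ^+ 2 = p * x + q -> x \in Num.int.
Proof.
move=> p_int q_int x_rat x_root; apply: Cint_rat_Aint => //.
apply: (@root_monic_Aint (('X - p%:P) * 'X - q%:P)).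
- by rewrite /root !hornerE; apply/eqP; rewrite mulrBl -expr2 x_root; ring.
- apply/monicP; rewrite lead_coefDl ?lead_coefMX ?lead_coefXsubC //.
  rewrite size_polyN size_mulX ?polyXsubC_eq0 // size_XsubC.
  exact: leq_ltn_trans (size_polyC_leq1 _) _.
apply/polyOverP => i; rewrite coefB coefMX coefB coefX !coefC.
by case: i => [|[|i]] /=; rewrite ?subr0 ?sub0r ?rpredN ?rpred0 ?rpred1.
Qed.

Section SRGParameters.
Variables (v k e d : nat).
Hypotheses (d_gt0 : (0 < d)%N) (d_lt_k : (d < k)%N) (k_lt_v : (k.+1 < v)%N).
Hypothesis param_identity : (k * k + d * k.+1 = k + e * k + d * v)%N.

Lemma compl_degreeE : (v - k.+1)%:R = v%:R - 1 - k%:R :> algC.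
Proof. by rewrite natrB 1?ltnW // -addn1 natrD; ring. Qed.

Lemma srg_e_lt_k : (e.+1 < k)%N.
Proof. nia. Qed.

(* v + e - 2 k is the last parameter of the complementary graph. *)
Lemma srg_compl_d_gt0 : (2 * k < v + e)%N.
Proof. nia. Qed.

Lemma srg_restricted_eigenvalues : exists r s : algC,
  [/\ r + s = e%:R - d%:R, r * s = d%:R - k%:R, 0 < r & s < -1].
Proof.
pose p : algC := e%:R - d%:R; pose D := sqrtC (p ^+ 2 + 4 * (k%:R - d%:R)).
have p_real : p \is Num.real by rewrite realB ?realn.
have kd_gt0 : 0 < k%:R - d%:R :> algC by rewrite subr_gt0 ltr_nat.
have D_ge0 : 0 <= D by rewrite sqrtC_ge0 addr_ge0 ?real_exprn_even_ge0 ?mulr_ge0 ?ltW.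
have D_sqr : D ^+ 2 = p ^+ 2 + 4 * (k%:R - d%:R) by rewrite sqrtCK.
exists ((p + D) / 2), ((p - D) / 2); split.
- by rewrite /p; field.
- apply/eqP; rewrite -subr_eq0; apply/eqP.
  transitivity ((p ^+ 2 + 4 * (k%:R - d%:R) - D ^+ 2) / 4); first by field.
  by rewrite D_sqr subrr mul0r.
- rewrite divr_gt0 // addrC -(opprK p) subr_gt0 real_ltr_sqr ?realN // D_sqr sqrrN.
  by rewrite ltrDl mulr_gt0.
- rewrite -subr_lt0 (_ : _ - -1 = (p + 2 - D) / 2); last by field.
  rewrite pmulr_llt0 ?invr_gt0 // subr_lt0.
  apply: real_ltr_sqr => //; first by apply: realD; rewrite ?p_real ?realn.
  rewrite D_sqr -subr_gt0.
  have -> : p ^+ 2 + 4 * (k%:R - d%:R) - (p + 2) ^+ 2 = 4 * (k%:R - e.+1%:R).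
    by rewrite /p -addn1 natrD; ring.
  by rewrite mulr_gt0 // subr_gt0 ltr_nat srg_e_lt_k.
Qed.

Section Balance.
Variables r s : algC.
Hypotheses (rs_add : r + s = e%:R - d%:R) (rs_mul : r * s = d%:R - k%:R).
Hypotheses (r_gt0 : 0 < r) (s_lt_m1 : s < -1).
(* For a graph, [balance] says that r has multiplicity k (srg_mult_degree_balance). *)
Local Notation balance := (k%:R * r + (v - k.+1)%:R * s + k%:R = 0).

Lemma conference_parameters_of_balance : balance -> (v - k.+1)%N = k ->
  conference_parameters v k e d.
Proof.
move=> bal w_eq_k; rewrite w_eq_k in bal.
have k_neq0 : k%:R != 0 :> algC by rewrite pnatr_eq0 -lt0n (ltn_trans d_gt0).
have /eqP : k%:R * (r + s + 1) = 0 :> algC by rewrite -bal; ring.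
rewrite mulf_eq0 (negPf k_neq0) rs_add /= => /eqP ed.
have {}ed : e.+1 = d by apply: natC_inj; rewrite -addn1 natrD; apply: (eq_of_subr_eq _ ed); ring.
have v_eq : v = (2 * k).+1 by lia.
have : (k * k = k * (2 * d))%N by move: param_identity; rewrite v_eq -ed; nia.
by move/eqP; rewrite eqn_pmul2l ?(ltn_trans d_gt0) // => /eqP k_eq; split; lia.
Qed.

Lemma balance_of_conference_parameters : conference_parameters v k e d -> balance.
Proof.
case=> v_eq k_eq e_eq; have w_eq_k : (v - k.+1)%N = k by lia.
have ed : e%:R - d%:R = -1 :> algC by rewrite e_eq natrB //; ring.
rewrite w_eq_k; transitivity (k%:R * (r + s + 1)); first by ring.
by rewrite rs_add ed addNr mulr0.
Qed.

Lemma oa_parameters_of_balance : balance -> (v - k.+1)%N != k ->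
  exists n m : nat,
    [/\ (0 < n)%N, (0 < m)%N, m <> n, m <> n.+1 & oa_parameters n m v k e d].
Proof.
move=> bal w_neq_k; set w := (v - k.+1)%N in bal w_neq_k.
have kw_neq0 : k%:R - w%:R != 0 :> algC by rewrite subr_eq0 eqr_nat eq_sym.
have r_rat : r \in Crat.
  have -> : r = (- k%:R - w%:R * (e%:R - d%:R)) / (k%:R - w%:R).
    by apply: (mulIf kw_neq0); rewrite divfK // -rs_add; apply: (eq_of_subr_eq _ bal); ring.
  by rewrite !(rpred_div, rpredB, rpredN, rpredM, rpred_nat).
have r_int : r \in Num.int.
  apply: (Cint_rat_quadratic_root (p := e%:R - d%:R) (q := k%:R - d%:R)) => //.
  - by rewrite rpredB ?intr_nat.
  - by rewrite rpredB ?intr_nat.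
  by rewrite -rs_add -[k%:R - d%:R]opprB -rs_mul; ring.
have [R r_eq] : exists R : nat, r = R%:R by apply/natrP; rewrite natrEint r_int ltW.
have [M s_eq] : exists M : nat, s = - M%:R.
  have s_int : - s \in Num.int.
    have -> : - s = r - (e%:R - d%:R) by rewrite -rs_add; ring.
    by rewrite rpredB // rpredB ?intr_nat.
  have /natrP [M M_eq] : - s \in Num.nat.
    by rewrite natrEint s_int oppr_ge0 ltW // (lt_trans s_lt_m1) ?oppr_lt0.
  by exists M; rewrite -M_eq opprK.
move: rs_add rs_mul bal r_gt0 s_lt_m1; rewrite r_eq s_eq => RM_add RM_mul RM_bal R_pos M_gt.
have R_gt0 : (0 < R)%N by rewrite -(ltr0n algC).
have M_gt1 : (1 < M)%N by rewrite -(ltr_nat algC) -ltrN2.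
have sum_eq : (R + d = e + M)%N.
  by apply: natC_inj; rewrite !natrD; apply: (eq_of_subr_eq _ RM_add); ring.
have prod_eq : (R * M + d = k)%N.
  by apply: natC_inj; rewrite natrD natrM; apply: (eq_of_subr_eq _ (esym RM_mul)); ring.
have bal_eq : (k * R + k = w * M)%N.
  by apply: natC_inj; rewrite natrD !natrM; apply: (eq_of_subr_eq _ RM_bal); ring.
have v_eq : v = (w + k.+1)%N by rewrite /w; lia.
exists (R + M)%N, M; split; last first.
  exact: oa_parameters_of_integral_eigenvalues R_gt0 M_gt1 v_eq param_identity
    sum_eq prod_eq bal_eq.
all: lia.
Qed.

Lemma balance_of_oa_parameters n m : (0 < m)%N -> oa_parameters n m v k e d -> balance.
Proof.
move=> m_gt0 [v_eq k_eq e_eq d_eq].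
have n_gt1 : (1 < n)%N.
  by move: (leq_ltn_trans (leq0n d) d_lt_k); rewrite k_eq muln_gt0 subn_gt0 => /andP[].
have e_add : (e + 3 * m = m ^ 2 + n)%N by rewrite e_eq subnK ?leq_mul3_sqr.
have eC : e%:R = m%:R ^+ 2 + n%:R - 3 * m%:R :> algC.
  by apply: (addIr (3 * m%:R)); rewrite subrK -natrX -natrM -!natrD e_add.
have dC : d%:R = m%:R * (m%:R - 1) :> algC by rewrite d_eq natrM natrB.
have kC : k%:R = m%:R * (n%:R - 1) :> algC by rewrite k_eq natrM natrB // ltnW.
have r_root : r ^+ 2 = (r + s) * r - r * s by ring.
rewrite rs_add rs_mul eC dC kC in r_root.
have r_eq : r = n%:R - m%:R.
  have rm_neq0 : r + m%:R != 0 by rewrite gt_eqF // ltr_wpDr.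
  by apply: (mulIf rm_neq0); apply: (eq_of_subr_eq _ r_root); ring.
have s_eq : s = - m%:R by apply: (addrI r); rewrite rs_add r_eq eC dC; ring.
by rewrite compl_degreeE v_eq natrX kC r_eq s_eq; ring.
Qed.
End Balance.
End SRGParameters.

Section AdjacencyMatrix.
Variables (T : finType) (adj : rel T).
Hypotheses (adj_sym : symmetric adj) (adj_irr : irreflexive adj).
Local Notation A := (adj_mx adj).
Local Notation J := (const_mx 1 : 'M[algC]_#|T|).

Lemma compl_graph_sym : symmetric (compl_graph adj).
Proof. by move=> x y; rewrite /compl_graph eq_sym adj_sym. Qed.

Lemma compl_graph_irr : irreflexive (compl_graph adj).
Proof. by move=> x; rewrite /compl_graph eqxx. Qed.

Lemma compl_graph_regular k : (forall x, #|[set y | adj x y]| = k) ->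
  forall x, #|[set y | compl_graph adj x y]| = (#|T| - k.+1)%N.
Proof.
move=> adj_reg x; have -> : [set y | compl_graph adj x y] = ~: (x |: [set y | adj x y]).
  by apply/setP => y; rewrite !inE negb_or eq_sym.
by rewrite cardsCs setCK cardsU1 adj_reg inE adj_irr.
Qed.

Lemma adj_mx_normal : A \is normalmx.
Proof.
apply: symmetric_normalmx; last by apply/mxOverP => i j; rewrite mxE realn.
apply/is_hermitianmxP; rewrite expr0 scale1r map_mx_id //.
by apply/matrixP => i j; rewrite !mxE adj_sym.
Qed.

Lemma sum_enum_val (F : T -> algC) : \sum_(l < #|T|) F (enum_val l) = \sum_x F x.
Proof. by rewrite (big_enum_val F). Qed.

Lemma mxtrace_adj_mx : \tr A = 0.
Proof. by apply: big1 => i _; rewrite mxE adj_irr. Qed.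

Lemma adj_mx_compl : adj_mx (compl_graph adj) = J - 1%:M - A.
Proof.
apply/matrixP => i j; rewrite !mxE /compl_graph (inj_eq enum_val_inj).
case: eqVneq => [->|_] /=; first by rewrite adj_irr subr0 subrr.
by rewrite subr0; case: adj; rewrite ?subrr ?subr0.
Qed.

Lemma adj_mx_sqrE i j :
  (A *m A) i j = (common_nbrs adj (enum_val i) (enum_val j))%:R.
Proof.
rewrite mxE /common_nbrs -sum1_card natr_sum [RHS]big_mkcond -sum_enum_val /=.
by apply: eq_bigr => l _; rewrite !mxE inE (adj_sym _ (enum_val j)) -natrM mulnb; case: (_ && _).
Qed.

Section Regular.
Variable k : nat.
Hypothesis adj_reg : forall x, #|[set y | adj x y]| = k.

Lemma mxtrace_adj_mx_sqr : \tr (A *m A) = #|T|%:R * k%:R.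
Proof.
rewrite /mxtrace (eq_bigr (fun _ => k%:R)) ?sumr_const ?card_ord ?mulr_natl // => i _.
rewrite adj_mx_sqrE /common_nbrs -(adj_reg (enum_val i)).
by congr (_%:R); apply: eq_card => y; rewrite !inE andbb.
Qed.

Lemma adj_mx_mul_ones : A *m J = k%:R *: J.
Proof.
apply/matrixP => i j; rewrite !mxE mulr1 -(adj_reg (enum_val i)) -sum1_card natr_sum.
rewrite [RHS]big_mkcond -sum_enum_val /=.
by apply: eq_bigr => l _; rewrite !mxE mulr1 inE; case: adj.
Qed.

Lemma ones_mul_adj_mx : J *m A = k%:R *: J.
Proof.
apply: trmx_inj; rewrite trmx_mul linearZ /= trmx_const.
have -> : A^T = A by apply/matrixP => i j; rewrite !mxE adj_sym.
exact: adj_mx_mul_ones.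
Qed.

End Regular.

Lemma ones_mul_ones : J *m J = #|T|%:R *: J.
Proof.
apply/matrixP => i j; rewrite !mxE mulr1 (eq_bigr (fun _ => 1)) => [|l _].
  by rewrite sumr_const card_ord.
by rewrite !mxE mulr1.
Qed.

End AdjacencyMatrix.

Lemma spectrumE (T : finType) (adj : rel T) : spectrum adj = eigenvalues (adj_mx adj).
Proof. by []. Qed.

Lemma sum_sqr_spectrum (T : finType) (adj : rel T) k : symmetric adj ->
  (forall x, #|[set y | adj x y]| = k) ->
  \sum_(z <- spectrum adj) z ^+ 2 = #|T|%:R * k%:R.
Proof.
move=> adj_sym adj_reg.
rewrite spectrumE sum_sqr_eigenvalues_normal ?adj_mx_normal //.
exact: mxtrace_adj_mx_sqr adj_reg.
Qed.

Lemma isospectral_compl_regular (T : finType) (adj : rel T) k :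
  symmetric adj -> irreflexive adj -> (0 < #|T|)%N ->
  (forall x, #|[set y | adj x y]| = k) ->
  isospectral adj (compl_graph adj) -> (#|T| - k.+1)%N = k.
Proof.
move=> adj_sym adj_irr T_gt0 adj_reg iso.
have := perm_big _ iso (op := +%R) (x := 0 : algC) (P := xpredT) (F := fun z => z ^+ 2).
rewrite (sum_sqr_spectrum adj_sym adj_reg).
rewrite (sum_sqr_spectrum (compl_graph_sym adj_sym) (compl_graph_regular adj_irr adj_reg)).
have T_neq0 : #|T|%:R != 0 :> algC by rewrite pnatr_eq0 -lt0n.
by move/(mulfI T_neq0)/natC_inj.
Qed.

(** * Strongly regular graphs *)

Section StronglyRegular.
Variables (T : finType) (adj : rel T) (v k e d : nat).
Hypotheses (adj_sym : symmetric adj) (adj_irr : irreflexive adj).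
Hypothesis srg : is_srg adj v k e d.
Local Notation A := (adj_mx adj).
Local Notation J := (const_mx 1 : 'M[algC]_#|T|).

Lemma srg_card : #|T| = v. Proof. by case: srg. Qed.

Lemma srg_regular x : #|[set y | adj x y]| = k. Proof. by case: srg. Qed.

(* The matrices x I + y A + z J form an algebra (bose_mesner_mul), in which matrix
   identities for A and for its complement J - I - A reduce to ring identities. *)
Definition bose_mesner (x y z : algC) : 'M[algC]_#|T| := x%:M + y *: A + z *: J.
Local Notation bm := bose_mesner.

Lemma adj_mx_bose_mesner : A = bm 0 1 0.
Proof. by apply/matrixP => i j; rewrite !mxE; case: (i == j); ring. Qed.

Lemma compl_adj_mx_bose_mesner : adj_mx (compl_graph adj) = bm (-1) (-1) 1.
Proof.
rewrite adj_mx_compl //; apply/matrixP => i j.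
by rewrite !mxE; case: (i == j); ring.
Qed.

Lemma bose_mesner_subr x y z w : bm x y z - w%:M = bm (x - w) y z.
Proof. by apply/matrixP => i j; rewrite !mxE; case: (i == j); ring. Qed.

Lemma bose_mesner0 : bm 0 0 0 = 0.
Proof. by apply/matrixP => i j; rewrite !mxE; case: (i == j); ring. Qed.

Lemma srg_adj_mx_sqr : A *m A = bm (k%:R - d%:R) (e%:R - d%:R) d%:R.
Proof.
have [_ _ adj_e adj_d _] := srg.
apply/matrixP => i j; rewrite adj_mx_sqrE // !mxE mulr1.
have [<-|ij] := eqVneq i j.
  rewrite adj_irr mulr0 addr0 mulr1n subrK -(srg_regular (enum_val i)).
  by congr (_%:R); apply: eq_card => y; rewrite !inE andbb.
have xy : enum_val i != enum_val j by rewrite (inj_eq enum_val_inj).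
rewrite mulr0n add0r.
by have [/adj_e -> | /(adj_d _ _ xy) ->] := boolP (adj _ _); rewrite ?mulr1 ?subrK ?mulr0 ?add0r.
Qed.

Lemma bose_mesner_mul x1 y1 z1 x2 y2 z2 :
  bm x1 y1 z1 *m bm x2 y2 z2 =
  bm (x1 * x2 + y1 * y2 * (k%:R - d%:R))
     (x1 * y2 + y1 * x2 + y1 * y2 * (e%:R - d%:R))
     (x1 * z2 + z1 * x2 + y1 * y2 * d%:R + (y1 * z2 + z1 * y2) * k%:R
      + z1 * z2 * v%:R).
Proof.
rewrite {1 2}/bose_mesner !mulmxDl !mulmxDr !mul_scalar_mx !mul_mx_scalar.
rewrite -!scalemxAl -!scalemxAr srg_adj_mx_sqr.
rewrite (adj_mx_mul_ones srg_regular) (ones_mul_adj_mx adj_sym srg_regular).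
have -> : J *m J = v%:R *: J by rewrite ones_mul_ones; congr (_%:R *: _); exact: srg_card.
by apply/matrixP => i j; rewrite !mxE; case: (i == j); ring.
Qed.

Lemma bose_mesner_diag x y z i : bm x y z i i = x + z.
Proof. by rewrite !mxE eqxx adj_irr mulr1n mulr1 /= mulr0 addr0. Qed.

Lemma srg_param_identity : (k * k + d * k.+1 = k + e * k + d * v)%N.
Proof.
(* Compare a diagonal entry of (A A) J and A (A J). *)
have [_ _ _ _ [_ [x0 _]]] := srg; pose i : 'I_#|T| := enum_rank x0.
have /matrixP/(_ i i) := mulmxA (bm 0 1 0) (bm 0 1 0) (bm 0 0 1).
rewrite !bose_mesner_mul !bose_mesner_diag => E.
by apply: natC_inj; rewrite -addn1 !natrD !natrM natrD; apply: (eq_of_subr_eq _ E); ring.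
Qed.

Lemma srg_k_lt_v : (k.+1 < v)%N.
Proof.
have [_ _ _ _ [[x [y [xy nxy]]] _]] := srg.
rewrite -subn_gt0 -srg_card -(compl_graph_regular adj_irr srg_regular x).
by apply/card_gt0P; exists y; rewrite inE /compl_graph xy.
Qed.

Lemma srg_d_gt0 : connected_graph adj -> (0 < d)%N.
Proof.
move=> adj_conn; have [_ _ _ adj_d [[x [y [xy nxy]]] _]] := srg.
rewrite lt0n; apply: contraNneq nxy => d0.
pose N := [pred z | (z == x) || adj x z].
suff N_closed : closed adj N.
  by have := closed_connect N_closed (adj_conn x y); rewrite !inE eqxx eq_sym (negPf xy).
apply: intro_closed; first exact: sym_connect_sym.
move=> z w zw; rewrite !inE => /orP[/eqP <- | xz]; first by rewrite zw orbT.
apply/norP => -[wx nxw]; have := adj_d x w; rewrite eq_sym wx nxw d0 => /(_ isT isT).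
by move/eqP; rewrite cards_eq0 => /eqP/setP/(_ z); rewrite !inE xz adj_sym zw.
Qed.

Lemma srg_d_lt_k : connected_graph (compl_graph adj) -> (d < k)%N.
Proof.
move=> compl_conn; have [_ _ _ adj_d [[x0 [y0 [xy0 nxy0]]] [x1 [y1 xy1]]]] := srg.
have d_le_k : (d <= k)%N.
  rewrite -(srg_regular x0) -(adj_d _ _ xy0 nxy0).
  by apply: subset_leq_card; apply/subsetP => z; rewrite !inE => /andP[].
rewrite ltn_neqAle d_le_k andbT; apply/eqP => dk.
have same_nbrs x y : compl_graph adj x y -> [set z | adj x z] = [set z | adj y z].
  case/andP => xy nxy; pose C := [set z | adj x z && adj y z].
  have C_sub (u : T) : C \subset [set z | adj u z] -> C = [set z | adj u z].
    move=> sub; apply/eqP; rewrite eqEcard sub srg_regular /=.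
    by rewrite /C -/(common_nbrs adj x y) adj_d // dk.
  have Cx : C = [set z | adj x z] by apply: C_sub; apply/subsetP => z; rewrite !inE => /andP[].
  have Cy : C = [set z | adj y z] by apply: C_sub; apply/subsetP => z; rewrite !inE => /andP[].
  by rewrite -Cx -Cy.
pose N := [pred z | [set w | adj z w] == [set w | adj x0 w]].
have N_closed : closed (compl_graph adj) N.
  apply: intro_closed; first exact/sym_connect_sym/compl_graph_sym.
  by move=> z w /same_nbrs zw; rewrite !inE zw.
have nbrs_x0 z : [set w | adj z w] = [set w | adj x0 w].
  by apply/eqP; have := closed_connect N_closed (compl_conn x0 z); rewrite !inE eqxx.
have : y1 \in [set w | adj x1 w] by rewrite inE.
by rewrite nbrs_x0 -(nbrs_x0 y1) inE adj_irr.
Qed.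

Lemma is_srg_params_unique v' k' e' d' :
  is_srg adj v' k' e' d' -> [/\ v' = v, k' = k, e' = e & d' = d].
Proof.
have [card_v deg_k adj_e adj_d [[x [y [xy nxy]]] [a [b ab]]]] := srg.
case=> card_v' deg_k' adj_e' adj_d' _; split.
- by rewrite -card_v -card_v'.
- by rewrite -(deg_k x) -(deg_k' x).
- by rewrite -(adj_e a b ab) -(adj_e' a b ab).
by rewrite -(adj_d x y xy nxy) -(adj_d' x y xy nxy).
Qed.

Lemma conference_graphE : conference_graph adj <-> conference_parameters v k e d.
Proof.
split=> [[t /is_srg_params_unique [<- <- <- <-]] // | [v_eq k_eq e_eq]].
by exists d; rewrite -v_eq -k_eq -e_eq.
Qed.

Lemma OA_paramsE n m : OA_params adj n m <-> oa_parameters n m v k e d.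
Proof.
split=> [/is_srg_params_unique [<- <- <- <-] // | [v_eq k_eq e_eq d_eq]].
by rewrite /OA_params -v_eq -k_eq -e_eq -d_eq.
Qed.

Lemma primitive_srg_restricted_eigenvalues : primitive_srg adj ->
  exists r s : algC, [/\ r + s = e%:R - d%:R, r * s = d%:R - k%:R, 0 < r & s < -1].
Proof.
case=> adj_conn compl_conn; apply: srg_restricted_eigenvalues srg_param_identity.
- exact: srg_d_gt0 adj_conn.
- exact: srg_d_lt_k compl_conn.
exact: srg_k_lt_v.
Qed.
End StronglyRegular.

(** * Spectrum and energy of a primitive strongly regular graph *)

Section SRGSpectrum.
Variables (T : finType) (adj : rel T) (v k e d : nat).
Hypotheses (adj_sym : symmetric adj) (adj_irr : irreflexive adj).
Hypothesis srg : is_srg adj v k e d.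
Hypotheses (adj_conn : connected_graph adj) (compl_conn : connected_graph (compl_graph adj)).
Variables r s : algC.
Hypotheses (rs_add : r + s = e%:R - d%:R) (rs_mul : r * s = d%:R - k%:R).
Hypotheses (r_gt0 : 0 < r) (s_lt_m1 : s < -1).

Local Notation A := (adj_mx adj).
Local Notation Ac := (adj_mx (compl_graph adj)).
Local Notation w := (v - k.+1)%N.
Local Notation f := (count_mem r (spectrum adj)).
Local Notation g := (count_mem s (spectrum adj)).

Let d_gt0 := srg_d_gt0 adj_sym srg adj_conn.
Let d_lt_k := srg_d_lt_k adj_sym adj_irr srg compl_conn.
Let k_lt_v := srg_k_lt_v adj_irr srg.
Let v_gt0 : (0 < v)%N := ltn_trans (ltn0Sn k) k_lt_v.
Let param_identity := srg_param_identity adj_sym adj_irr srg.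

Let s_lt_r : s < r := lt_trans s_lt_m1 (lt_trans (ltrN10 _) r_gt0).
Let eC : e%:R = r + s + d%:R. Proof. by rewrite rs_add subrK. Qed.
Let kC : k%:R = d%:R - r * s. Proof. by rewrite rs_mul opprB addrC subrK. Qed.

Let identityC : k%:R * k%:R + d%:R * (k%:R + 1) = k%:R + e%:R * k%:R + d%:R * v%:R :> algC.
Proof.
move: param_identity; rewrite -addn1 => /(congr1 (GRing.natmul (1 : algC))).
by rewrite !natrD !natrM => E; apply: (eq_of_subr_eq _ E); ring.
Qed.

Lemma srg_adj_mx_annihilated : (A - r%:M) *m (A - s%:M) *m (A - k%:R%:M) = 0.
Proof.
rewrite (adj_mx_bose_mesner adj) !bose_mesner_subr !(bose_mesner_mul adj_sym adj_irr srg).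
by rewrite -(bose_mesner0 adj) eC kC; congr bose_mesner; ring.
Qed.

Lemma srg_compl_annihilated :
  (Ac - (-1 - r)%:M) *m (Ac - (-1 - s)%:M) *m (Ac - w%:R%:M) = 0.
Proof.
rewrite compl_degreeE // (compl_adj_mx_bose_mesner adj_irr) !bose_mesner_subr.
rewrite !(bose_mesner_mul adj_sym adj_irr srg) -(bose_mesner0 adj) eC kC.
by congr bose_mesner; ring.
Qed.

Lemma srg_eigenvalue_gap : (k%:R - r) * (k%:R - s) = v%:R * d%:R.
Proof. by apply: (eq_of_subr_eq _ identityC); rewrite eC kC; ring. Qed.

Lemma srg_compl_eigenvalue_gap :
  (w%:R - (-1 - r)) * (w%:R - (-1 - s)) = v%:R * (w%:R + (-1 - r) * (-1 - s)).
Proof. by apply: (eq_of_subr_eq _ identityC); rewrite compl_degreeE // eC kC; ring. Qed.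

Lemma srg_eigenvalues_uniq : uniq [:: r; s; k%:R].
Proof.
have : (k%:R - r) * (k%:R - s) != 0.
  by rewrite srg_eigenvalue_gap mulf_neq0 // pnatr_eq0 -lt0n.
rewrite mulf_eq0 negb_or !subr_eq0 => /andP[kr ks].
by rewrite /= !inE negb_or !(eq_sym _ k%:R) kr ks gt_eqF.
Qed.

Lemma srg_compl_eigenvalues_uniq : uniq [:: -1 - r; -1 - s; w%:R].
Proof.
have : (w%:R - (-1 - r)) * (w%:R - (-1 - s)) != 0.
  rewrite srg_compl_eigenvalue_gap mulf_neq0 // ?pnatr_eq0 -?lt0n //.
  have -> : w%:R + (-1 - r) * (-1 - s) = (v + e)%:R - (2 * k)%:R.
    by rewrite compl_degreeE // natrD natrM eC kC; ring.
  by rewrite subr_eq0 eqr_nat gtn_eqF // (srg_compl_d_gt0 d_gt0 d_lt_k k_lt_v param_identity).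
rewrite mulf_eq0 negb_or !subr_eq0 => /andP[wr ws].
by rewrite /= !inE negb_or !(eq_sym _ w%:R) wr ws (inj_eq (addrI _)) eqr_opp gt_eqF.
Qed.

Let A_normal := adj_mx_normal adj_sym.
Let A_trace := mxtrace_adj_mx adj_irr.
Let A_trace_sqr := mxtrace_adj_mx_sqr adj_sym (srg_regular srg).
Let A_gap : (k%:R - r) * (k%:R - s) = #|T|%:R * (k%:R + r * s).
Proof. by rewrite srg_eigenvalue_gap (srg_card srg) kC; congr (_ * _); ring. Qed.

Lemma srg_multiplicities :
  f%:R + g%:R = v%:R - 1 :> algC /\ f%:R * r + g%:R * s = - k%:R.
Proof.
split; last first.
  exact: count_eigenvalues_trace A_normal srg_adj_mx_annihilated srg_eigenvalues_uniq
    A_trace A_trace_sqr A_gap.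
rewrite -(srg_card srg).
exact: count_eigenvalues_add A_normal srg_adj_mx_annihilated srg_eigenvalues_uniq
  A_trace A_trace_sqr A_gap.
Qed.

Lemma srg_spectrum_sum (F : algC -> algC) :
  \sum_(z <- spectrum adj) F z = f%:R * F r + g%:R * F s + F k%:R.
Proof.
exact: sum_eigenvalues_simple A_normal srg_adj_mx_annihilated srg_eigenvalues_uniq
  A_trace A_trace_sqr A_gap F.
Qed.

Let Ac_normal := adj_mx_normal (compl_graph_sym adj_sym).
Let Ac_trace := mxtrace_adj_mx (@compl_graph_irr _ adj).
Let Ac_trace_sqr : \tr (Ac *m Ac) = #|T|%:R * w%:R.
Proof.
have Ac_reg := compl_graph_regular adj_irr (srg_regular srg).
by rewrite (mxtrace_adj_mx_sqr (compl_graph_sym adj_sym) Ac_reg) (srg_card srg).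
Qed.
Let Ac_gap :
  (w%:R - (-1 - r)) * (w%:R - (-1 - s)) = #|T|%:R * (w%:R + (-1 - r) * (-1 - s)).
Proof. by rewrite (srg_card srg) srg_compl_eigenvalue_gap. Qed.

Lemma srg_compl_spectrum_sum (F : algC -> algC) :
  \sum_(z <- spectrum (compl_graph adj)) F z =
  f%:R * F (-1 - r) + g%:R * F (-1 - s) + F w%:R.
Proof.
have := count_eigenvalues_add Ac_normal srg_compl_annihilated srg_compl_eigenvalues_uniq
  Ac_trace Ac_trace_sqr Ac_gap.
have := count_eigenvalues_trace Ac_normal srg_compl_annihilated srg_compl_eigenvalues_uniq
  Ac_trace Ac_trace_sqr Ac_gap.
rewrite [in _ - 1](srg_card srg) -spectrumE.
set x := count_mem (-1 - r) _; set y := count_mem (-1 - s) _ => xy_trace xy_add.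
have [fg_add fg_trace] := srg_multiplicities.
(* Both pairs of multiplicities solve x + y = v - 1 and x r + y s = -k. *)
have xy_moment : x%:R * r + y%:R * s = f%:R * r + g%:R * s :> algC.
  rewrite fg_trace; apply/subr0_eq.
  transitivity (- (x%:R * (-1 - r) + y%:R * (-1 - s) + w%:R) - (x%:R + y%:R - (v%:R - 1))).
    by rewrite compl_degreeE //; ring.
  by rewrite xy_trace xy_add; ring.
have [|xf yg] := two_point_weights_unique _ (etrans xy_add (esym fg_add)) xy_moment.
  by rewrite gt_eqF.
rewrite (spectrumE (compl_graph adj)).
rewrite (sum_eigenvalues_simple Ac_normal srg_compl_annihilated srg_compl_eigenvalues_uniq
  Ac_trace Ac_trace_sqr Ac_gap).
by rewrite -spectrumE -/x -/y xf yg.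
Qed.

Local Notation balance := (k%:R * r + w%:R * s + k%:R = 0).

Lemma srg_energy : energy adj = f%:R * r - g%:R * s + k%:R.
Proof.
have s_lt0 : s < 0 := lt_trans s_lt_m1 (ltrN10 _).
by rewrite /energy srg_spectrum_sum gtr0_norm // ltr0_norm // normr_nat mulrN.
Qed.

Lemma srg_compl_energy :
  energy (compl_graph adj) = f%:R * (1 + r) + g%:R * (-1 - s) + w%:R.
Proof.
have m1r_lt0 : -1 - r < 0 by rewrite subr_lt0 (lt_trans (ltrN10 _)).
have m1s_gt0 : 0 < -1 - s by rewrite subr_gt0.
rewrite /energy srg_compl_spectrum_sum ltr0_norm // gtr0_norm //.
by rewrite normr_nat opprB opprK (addrC r).
Qed.

Lemma srg_energy_compl_eq : energy adj = energy (compl_graph adj) <-> f = k.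
Proof.
have [fg_add fg_trace] := srg_multiplicities.
have diff : energy adj - energy (compl_graph adj) = 2 * (k%:R - f%:R).
  rewrite srg_energy srg_compl_energy compl_degreeE //.
  transitivity (k%:R - f%:R + (f%:R + g%:R) - (v%:R - 1) + (k%:R - f%:R) : algC).
    by ring.
  by rewrite fg_add; ring.
split=> [E_eq | f_k]; last by apply/subr0_eq; rewrite diff f_k subrr mulr0.
have two_neq0 : (2 : algC) != 0 by rewrite pnatr_eq0.
apply/natC_inj/esym/subr0_eq/(mulfI two_neq0).
by rewrite -diff E_eq subrr mulr0.
Qed.

Lemma srg_mult_degree_balance : f = k <-> balance.
Proof.
have [fg_add fg_trace] := srg_multiplicities.
have rs_neq0 : r - s != 0 by rewrite subr_eq0 gt_eqF.
have key : (f%:R - k%:R) * (r - s) = - (k%:R * r + w%:R * s + k%:R).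
  rewrite compl_degreeE //.
  transitivity (f%:R * r + g%:R * s - s * (f%:R + g%:R) - (k%:R * r - k%:R * s)).
    by ring.
  by rewrite fg_add fg_trace; ring.
split=> [f_k | bal]; first by apply: oppr_inj; rewrite -key f_k subrr mul0r oppr0.
apply/natC_inj/subr0_eq/(mulIf rs_neq0).
by rewrite key bal oppr0 mul0r.
Qed.

Lemma srg_energy_compl_eq_parameters :
  energy adj = energy (compl_graph adj) <->
  conference_parameters v k e d \/
  exists n m : nat,
    [/\ (0 < n)%N, (0 < m)%N, m <> n, m <> n.+1 & oa_parameters n m v k e d].
Proof.
rewrite srg_energy_compl_eq srg_mult_degree_balance; split=> [bal | ].
  have [w_k | w_neq_k] := eqVneq w k.
    by left; apply: conference_parameters_of_balance bal w_k.
  by right; apply: oa_parameters_of_balance bal w_neq_k.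
case=> [conf | [n [m [_ m_gt0 _ _ oa]]]].
  exact: balance_of_conference_parameters conf.
exact: balance_of_oa_parameters m_gt0 oa.
Qed.

Lemma srg_isospectral_compl_conference : energy adj = energy (compl_graph adj) ->
  isospectral adj (compl_graph adj) -> conference_parameters v k e d.
Proof.
move=> /srg_energy_compl_eq/srg_mult_degree_balance bal iso.
have w_k : w = k.
  rewrite -(srg_card srg).
  apply: isospectral_compl_regular adj_sym adj_irr _ (srg_regular srg) iso.
  by rewrite (srg_card srg).
by apply: conference_parameters_of_balance bal w_k.
Qed.
End SRGSpectrum.

Local Close Scope ring_scope.

Theorem mainTheorem13 (T : finType) (adj : rel T)
    (adj_sym : symmetric adj) (adj_irr : irreflexive adj)
    (n0 k0 e0 d0 : nat) (srg : is_srg adj n0 k0 e0 d0)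
    (prim : primitive_srg adj) :
  (energy adj = energy (compl_graph adj) <->
     conference_graph adj \/
     exists n m : nat, [/\ 0 < n, 0 < m, m <> n, m <> n.+1 & OA_params adj n m])
  /\
  (energy adj = energy (compl_graph adj) -> ~ conference_graph adj ->
     ~ isospectral adj (compl_graph adj)).
Proof.
have [r [s [rs_add rs_mul r_gt0 s_lt_m1]]] :=
  primitive_srg_restricted_eigenvalues adj_sym adj_irr srg prim.
have [adj_conn compl_conn] := prim.
have energyE := srg_energy_compl_eq_parameters adj_sym adj_irr srg adj_conn compl_conn
  rs_add rs_mul r_gt0 s_lt_m1.
have confE := conference_graphE srg; have oaE := OA_paramsE srg.
split; first split.
- move/energyE => [/confE conf | [n [m [n_gt0 m_gt0 mn mn1 /oaE oa]]]]; first by left.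
  by right; exists n, m.
- move=> [/confE conf | [n [m [n_gt0 m_gt0 mn mn1 /oaE oa]]]]; apply/energyE; first by left.
  by right; exists n, m.
move=> E_eq not_conf iso; apply/not_conf/confE.
exact: (srg_isospectral_compl_conference adj_sym adj_irr srg adj_conn compl_conn
  rs_add rs_mul r_gt0 s_lt_m1 E_eq iso).
Qed.
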